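(* Let $r\ge 1$ be an integer and let $A$ be a finite totally ordered alphabet of digits whose smallest letter is $0$. Let $w_0,\ldots,w_{r-1}$ be $r$ non-empty words in $\mathsf{inc}(A^* )$ such that $\mathsf{s}=(w_0,\ldots,w_{r-1})^\omega$ is a purely periodic labeled signature, let $L(\mathsf{s})$ be the associated language and $\mathcal{S}=(L(\mathsf{s}),A,<)$ the associated abstract numeration system. Let $\mathcal{A}=(Q,q_0,A,\delta)$ be a deterministic finite automaton (with complete transition function $\delta:Q\times A\to Q$). For $i\in\{0,\ldots,r-1\}$ define the morphism $f_i:Q^*\to Q^*$ by $$f_i(q)=\delta(q,w_{i,0})\,\delta(q,w_{i,1})\cdots\delta(q,w_{i,|w_i|-1})\quad(q\in Q),$$ where $w_{i,j}$ is the $j$th letter of $w_i$ (indexed from $0$). Let $\mathbf{x}=x_0x_1\cdots$ be the alternating fixed point of $(f_0,\ldots,f_{r-1})$ starting with $q_0$ (i.e., with $x_0=q_0$). Then for all $n\ge 0$, $x_n=\delta(q_0,\mathrm{rep}_{\mathcal{S}}(n))$; that is, $\mathbf{x}$ is the sequence of states reached in $\mathcal{A}$ when reading the words of $L(\mathsf{s})$ in increasing radix order.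
   Context: $\mathsf{inc}(A^* )$ is the set of words over $A$ whose letters are in strictly increasing order. A purely periodic labeled signature is an infinite sequence $\mathsf{s}=(s_n)_{n\ge0}$ with $s_n=w_{n\bmod r}$, where each $w_i\in\mathsf{inc}(A^* )$ and $w_0=0y$ for some non-empty word $y$. It generates an infinite labeled tree (an ''i-tree'') as follows: nodes $v_0,v_1,v_2,\ldots$ are created in breadth-first order; $v_0$ is the root; the children of $v_n$ are reached by edges labeled by the letters of $s_n$ in increasing order, new children receiving the next unused indices in this order; for the root, the edge labeled $0$ is a loop from $v_0$ to itself, and the other letters of $s_0$ lead to $v_1,\ldots,v_{|s_0|-1}$; then the children of $v_1$, then of $v_2$, etc. The language $L(\mathsf{s})$ is the set of labels of paths from the root that do not start with $0$ (i.e., that do not use the loop); each node corresponds to exactly one word of $L(\mathsf{s})$, and $v_n$ corresponds to the $(n+1)$st word of $L(\mathsf{s})$ in radix order (words ordered first by length, then lexicographically). For the abstract numeration system $\mathcal{S}=(L(\mathsf{s}),A,<)$, $\mathrm{rep}_{\mathcal{S}}(n)$ is the $(n+1)$st word of $L(\mathsf{s})$ in radix order (so $\mathrm{rep}_{\mathcal{S}}(0)=\varepsilon$). An infinite word $\mathbf{x}=x_0x_1\cdots$ is an alternating fixed point of $(f_0,\ldots,f_{r-1})$ if $\mathbf{x}=f_0(x_0)f_1(x_1)\cdots f_{i\bmod r}(x_i)\cdots$. *)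

From mathcomp Require Import all_boot.
Set Implicit Arguments. Unset Strict Implicit. Unset Printing Implicit Defensive.

(* Letters of the alphabet A are natural numbers with their usual order;
   the smallest letter is 0. Words are seq nat. *)

Definition inc (w : seq nat) : bool := sorted ltn w.

Definition sig (ws : seq (seq nat)) (n : nat) : seq nat := nth [::] ws (n %% size ws).

(* number of children of node v_m in the i-tree (the root's 0-loop excluded) *)
Definition nchildren (ws : seq (seq nat)) (m : nat) : nat :=
  if m == 0 then (size (sig ws 0)).-1 else size (sig ws m).

(* index of the first child of v_m (children created in BFS order) *)
Definition start (ws : seq (seq nat)) (m : nat) : nat :=
  1 + \sum_(j < m) nchildren ws j.

(* the child of v_m along the edge labelled a (None if no such edge;
   the loop labelled 0 at the root is not an edge of the paths considered) *)
Definition child (ws : seq (seq nat)) (m a : nat) : option nat :=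
  if (a \in sig ws m) && ~~ ((m == 0) && (a == 0))
  then Some (start ws m + index a (sig ws m) - (m == 0))
  else None.

Definition run (ws : seq (seq nat)) (u : seq nat) : option nat :=
  foldl (fun o a => obind (fun k => child ws k a) o) (Some 0) u.

(* L(s): labels of paths from the root not using the loop *)
Definition inL (ws : seq (seq nat)) (u : seq nat) : bool := run ws u != None.

Fixpoint lexlt (u v : seq nat) : bool :=
  match u, v with
  | a :: u', b :: v' => (a < b) || ((a == b) && lexlt u' v')
  | _, _ => false
  end.

Definition radix_lt (u v : seq nat) : bool :=
  (size u < size v) || ((size u == size v) && lexlt u v).

Definition is_rep (ws : seq (seq nat)) (n : nat) (u : seq nat) : Prop :=
  inL ws u /\
  exists l : seq (seq nat),
    [/\ uniq l, (forall v, (v \in l) = inL ws v && radix_lt v u) & size l = n].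

(* the morphism f_i : q |-> delta(q, w_{i,0}) ... delta(q, w_{i,|w_i|-1})
   (index i taken mod r) *)
Definition morph (ws : seq (seq nat)) (Q : Type) (delta : Q -> nat -> Q)
  (i : nat) (q : Q) : seq Q := [seq delta q a | a <- sig ws i].

(* x = f_0(x_0) f_1(x_1) ... f_(i mod r)(x_i) ... : the block f_(i mod r)(x_i)
   occupies positions  sum_(k<i) |w_(k mod r)|  ...  *)
Definition alt_fp (ws : seq (seq nat)) (Q : Type) (delta : Q -> nat -> Q)
  (x : nat -> Q) : Prop :=
  forall i j, j < size (morph ws delta i (x i)) ->
    x (\sum_(k < i) size (sig ws k) + j) = nth (x i) (morph ws delta i (x i)) j.

From mathcomp Require Import all_boot zify.
Set Implicit Arguments. Unset Strict Implicit.

(** Reading a word of L(s) from the root leads to a node v_k, and k is the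
    rank of the word in radix order: the children of a node are numbered
    consecutively in the order of their labels, and the children of earlier
    nodes get smaller numbers, so the map from L(s) to nodes is strictly
    increasing for the radix order; it is onto since every node has a parent.
    On the other hand the block f_i(x_i) of the alternating fixed point
    occupies exactly the positions of the children of v_i, so the letter of
    x at the child of v_i along a is delta(x_i, a), and by induction on the
    word x_k is the state reached from q0. *)

Lemma lexlt_rcons u v a b : size u = size v ->
  lexlt (rcons u a) (rcons v b) = lexlt u v || ((u == v) && (a < b)).
Proof.
elim: u v => [|c u IHu] [|d v] //=; first by rewrite andbF orbF.
move=> [eq_uv]; rewrite IHu // eqseq_cons.
by case: (ltngtP c d) => //= ->; rewrite eqxx.
Qed.

Lemma radix_lt_rcons u v a b :
  radix_lt (rcons u a) (rcons v b) = radix_lt u v || ((u == v) && (a < b)).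
Proof.
rewrite /radix_lt !size_rcons ltnS eqSS.
case: (ltngtP (size u) (size v)) => [//|gt_uv|]; last exact: lexlt_rcons.
by case: eqP => // eq_uv; rewrite eq_uv ltnn in gt_uv.
Qed.

Lemma lexlt_total u v : size u = size v -> u != v -> lexlt u v || lexlt v u.
Proof.
elim: u v => [|c u IHu] [|d v] //= [eq_uv]; rewrite eqseq_cons negb_and.
by case: (ltngtP c d) => //= _; apply: IHu.
Qed.

Lemma radix_lt_total u v : u != v -> radix_lt u v || radix_lt v u.
Proof.
by rewrite /radix_lt; case: (ltngtP (size u) (size v)) => //=; apply: lexlt_total.
Qed.

Lemma sorted_ltn_index_mono (s : seq nat) a b : sorted ltn s ->
  a \in s -> b \in s -> a < b -> index a s < index b s.
Proof.
move=> s_sorted sa sb lt_ab; rewrite ltnNge; apply/negP => le_ba.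
move: s_sorted; rewrite ltn_sorted_uniq_leq => /andP [_ s_leq].
by have := sorted_leq_index leq_trans leqnn s_leq b a sb sa le_ba; lia.
Qed.

Lemma run_rcons ws u a :
  run ws (rcons u a) = obind (fun k => child ws k a) (run ws u).
Proof. by rewrite /run foldl_rcons. Qed.

Lemma start0 ws : start ws 0 = 1.
Proof. by rewrite /start big_ord0. Qed.

Lemma startS ws m : start ws m.+1 = start ws m + nchildren ws m.
Proof. by rewrite /start big_ord_recr /= addnA. Qed.

Section ITree.

Variable ws : seq (seq nat).
Hypothesis ws_gt0 : 0 < size ws.
Hypothesis ws_inc : all (fun w => (w != [::]) && inc w) ws.
Hypothesis ws_root : exists y : seq nat, y != [::] /\ nth [::] ws 0 = 0 :: y.

Lemma sig_inc m : (sig ws m != [::]) && inc (sig ws m).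
Proof. by move/allP: ws_inc; apply; rewrite mem_nth // ltn_mod. Qed.

Lemma sig_gt0 m : 0 < size (sig ws m).
Proof. by case/andP: (sig_inc m); case: (sig ws m). Qed.

Lemma sig_uniq m : uniq (sig ws m).
Proof.
by case/andP: (sig_inc m) => _; rewrite /inc ltn_sorted_uniq_leq => /andP [].
Qed.

Lemma sig0E : sig ws 0 = 0 :: behead (sig ws 0).
Proof. by case: ws_root => y [_]; rewrite /sig mod0n => ->. Qed.

Lemma nchildren_gt0 m : 0 < nchildren ws m.
Proof.
rewrite /nchildren; case: m => [|m] /=; last exact: sig_gt0.
by case: ws_root => y [y_neq0]; rewrite /sig mod0n => ->; rewrite lt0n size_eq0.
Qed.

(* The 0-loop makes v_0 the first child of v_0, so for m > 0 the children of
   v_m are numbered exactly like the block f_m(x_m) in the fixed point. *)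
Lemma startE m : start ws m = \sum_(k < m) size (sig ws k) + (m == 0).
Proof.
elim: m => [|m IHm]; first by rewrite start0 big_ord0.
rewrite startS IHm big_ord_recr /= /nchildren.
by case: m {IHm} => [|m] /=; rewrite ?big_ord0; have := sig_gt0 0; lia.
Qed.

Lemma ltn_start m : m < start ws m.
Proof.
by elim: m => [|m IHm]; rewrite ?start0 // startS; have := nchildren_gt0 m; lia.
Qed.

Lemma start_nchildren_le m m' : m < m' ->
  start ws m + nchildren ws m <= start ws m'.
Proof.
elim: m' => [//|m' IHm']; rewrite ltnS leq_eqVlt startS => /predU1P [-> //|].
by move/IHm'; lia.
Qed.

Lemma child_Some m a k : child ws m a = Some k ->
  [/\ a \in sig ws m, (m == 0) <= index a (sig ws m),
      k = start ws m + index a (sig ws m) - (m == 0) &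
      start ws m <= k < start ws m + nchildren ws m].
Proof.
rewrite /child; case: ifP => // /andP [sa not_loop] [<-].
have le_root : (m == 0) <= index a (sig ws m).
  by case: eqP not_loop => //= -> a_neq0; rewrite sig0E /= eq_sym (negbTE a_neq0).
split=> //; have := index_mem a (sig ws m); rewrite sa /nchildren.
by case: eqP le_root => [->|_] /=; lia.
Qed.

Lemma child_onto m k : k < nchildren ws m ->
  child ws m (nth 0 (sig ws m) (k + (m == 0))) = Some (start ws m + k).
Proof.
set a := nth 0 _ _ => lt_k.
have lt_ka : k + (m == 0) < size (sig ws m).
  by move: lt_k; rewrite /nchildren; case: eqP => [->|_]; have := sig_gt0 0; lia.
have sa : a \in sig ws m by apply: mem_nth.
have index_a : index a (sig ws m) = k + (m == 0) by rewrite index_uniq ?sig_uniq.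
have not_loop : ~~ ((m == 0) && (a == 0)).
  apply/andP => -[/eqP m0 /eqP a0]; move: index_a.
  by rewrite a0 m0 sig0E /= addn1.
by rewrite /child sa not_loop index_a addnA addnK.
Qed.

Lemma parent_exists n : 0 < n ->
  exists2 m, m < n & start ws m <= n < start ws m + nchildren ws m.
Proof.
move=> n_gt0; suff: forall N, n < start ws N ->
    exists2 m, m < N & start ws m <= n < start ws m + nchildren ws m.
  by move/(_ n (ltn_start n)).
elim=> [|N IHN]; first by rewrite start0; lia.
rewrite startS => lt_n; case: (ltnP n (start ws N)) => [/IHN [m lt_m]|le_n].
  by exists m => //; lia.
by exists N => //; lia.
Qed.

Lemma run_onto n : exists u, run ws u = Some n.
Proof.
elim/ltn_ind: n => n IHn; have [->|n_gt0] := posnP n; first by exists [::].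
have [m lt_mn /andP [le_mn lt_nm]] := parent_exists n_gt0.
have [u run_u] := IHn m lt_mn.
exists (rcons u (nth 0 (sig ws m) (n - start ws m + (m == 0)))).
by rewrite run_rcons run_u /= child_onto ?subnKC //; lia.
Qed.

Lemma run_state (Q : Type) (delta : Q -> nat -> Q) (x : nat -> Q) u k :
  alt_fp ws delta x -> run ws u = Some k -> x k = foldl delta (x 0) u.
Proof.
move=> x_fp; elim/last_ind: u k => [|u a IHu] k; first by case=> <-.
rewrite run_rcons foldl_rcons; case run_u: (run ws u) => [m|] //= child_a.
rewrite -(IHu m run_u); case: (child_Some child_a) => sa _ -> _.
have lt_a : index a (sig ws m) < size (sig ws m) by rewrite index_mem.
rewrite startE addnAC addnK x_fp ?size_map //.
by rewrite (nth_map 0) // nth_index.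
Qed.

Definition node u := odflt 0 (run ws u).

Lemma run_node u : inL ws u -> run ws u = Some (node u).
Proof. by rewrite /inL /node; case: (run ws u). Qed.

Lemma inL_rcons u a : inL ws (rcons u a) -> inL ws u.
Proof. by rewrite /inL run_rcons; case: (run ws u). Qed.

Lemma child_node u a : inL ws (rcons u a) ->
  child ws (node u) a = Some (node (rcons u a)).
Proof.
by move=> uaL; rewrite -(run_node uaL) run_rcons (run_node (inL_rcons uaL)).
Qed.

Lemma node_mono u v : inL ws u -> inL ws v -> radix_lt u v -> node u < node v.
Proof.
elim/last_ind: v u => [|v b IHv] u uL vbL; first by case: u {uL}.
have /child_Some [sb le_b -> /andP [le_vb _]] := child_node vbL.
case/lastP: u uL => [|u a] uaL lt_uv.
  by apply: leq_trans le_vb; apply: leq_trans (ltn_start _).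
have /child_Some [sa le_a -> /andP [_ lt_ua]] := child_node uaL.
rewrite radix_lt_rcons in lt_uv; case/orP: lt_uv => [lt_uv|/andP [/eqP eq_uv lt_ab]].
  by have := start_nchildren_le (IHv u (inL_rcons uaL) (inL_rcons vbL) lt_uv); lia.
subst v; have /andP [_ sorted_sig] := sig_inc (node u).
by have := sorted_ltn_index_mono sorted_sig sa sb lt_ab; lia.
Qed.

Lemma node_inj u v : inL ws u -> inL ws v -> node u = node v -> u = v.
Proof.
move=> uL vL eq_node; apply/eqP; apply: contraT => /radix_lt_total.
by case/orP=> [/(node_mono uL vL) | /(node_mono vL uL)]; rewrite eq_node ltnn.
Qed.

Lemma radix_lt_node u v : inL ws u -> inL ws v -> radix_lt u v = (node u < node v).
Proof.
move=> uL vL; apply/idP/idP; first exact: node_mono.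
move=> lt_uv; have /radix_lt_total : u != v.
  by apply: contraTneq lt_uv => ->; rewrite ltnn.
by case/orP=> // /(node_mono vL uL); rewrite ltnNge ltnW.
Qed.

Lemma words_below n : exists l : seq (seq nat),
  [/\ uniq l, forall v, (v \in l) = inL ws v && (node v < n) & size l = n].
Proof.
elim: n => [|n [l [l_uniq mem_l size_l]]].
  by exists [::]; split=> // v; rewrite andbF.
have [u run_u] := run_onto n.
have uL : inL ws u by rewrite /inL run_u.
have node_u : node u = n by rewrite /node run_u.
exists (u :: l); split=> /=; last by rewrite size_l.
  by rewrite l_uniq mem_l node_u ltnn andbF.
move=> v; rewrite in_cons mem_l.
have [-> |neq_vu] := eqVneq v u; first by rewrite uL node_u ltnSn.
rewrite ltnS [node v <= n]leq_eqVlt; case vL: (inL ws v) => //=.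
case: (node v =P n) => // node_v.
by case/eqP: neq_vu; apply: node_inj; rewrite // node_u.
Qed.

End ITree.

Theorem mainTheorem3 (r : nat) (ws : seq (seq nat)) (Q : finType) (q0 : Q)
  (delta : Q -> nat -> Q) (x : nat -> Q) :
  1 <= r -> size ws = r ->
  all (fun w => (w != [::]) && inc w) ws ->
  (exists y : seq nat, y != [::] /\ nth [::] ws 0 = 0 :: y) ->
  alt_fp ws delta x -> x 0 = q0 ->
  forall n : nat, exists u : seq nat, is_rep ws n u /\ x n = foldl delta q0 u.
Proof.
move=> r_gt0 size_ws ws_inc ws_root x_fp x0 n.
have ws_gt0 : 0 < size ws by rewrite size_ws.
have [u run_u] := run_onto ws_gt0 ws_inc ws_root n.
have uL : inL ws u by rewrite /inL run_u.
have node_u : node ws u = n by rewrite /node run_u.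
exists u; split; last by rewrite -x0 (run_state ws_gt0 ws_inc ws_root x_fp run_u).
split=> //; have [l [l_uniq mem_l size_l]] := words_below ws_gt0 ws_inc ws_root n.
exists l; split=> // v; rewrite mem_l -node_u.
by case vL: (inL ws v) => //=; rewrite (radix_lt_node ws_gt0 ws_inc ws_root).
Qed.
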